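(* Let $\eta>0$, $\beta\in\mathbb{R}$, and let $\widehat{\mathcal{L}}_1,\widehat{\mathcal{L}}_2\in\mathbb{R}^{N\times N}$ satisfy $\langle \widehat{\mathcal{L}}_i\mathbf{x},\mathbf{x}\rangle\le 0$ for all $\mathbf{x}\in\mathbb{R}^N$ ($i=1,2$) and $\langle \widehat{\mathcal{L}}_1\mathbf{w},\widehat{\mathcal{L}}_2\mathbf{w}\rangle\ge 0$ for all $\mathbf{w}\in\mathbb{R}^N$. With $\gamma_*:=\frac{\eta^2+\beta^2}{\eta}$ and $$\mathcal{P}_{\gamma_*}:=\left[\eta I-\widehat{\mathcal{L}}_2+\beta^2(\eta I-\widehat{\mathcal{L}}_1)^{-1}\right](\gamma_* I-\widehat{\mathcal{L}}_2)^{-1},$$ the smallest singular value satisfies $$s_{\min}(\mathcal{P}_{\gamma_*})=\min_{\mathbf{v}\neq\mathbf{0}}\frac{\|\mathcal{P}_{\gamma_*}\mathbf{v}\|}{\|\mathbf{v}\|}\ \ge\ \frac{\eta^2}{\eta^2+\beta^2}.$$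
   Context: $\langle\cdot,\cdot\rangle$ and $\|\cdot\|$ denote the Euclidean inner product and norm on $\mathbb{R}^N$. *)

From mathcomp Require Import all_boot all_order all_algebra.
Set Implicit Arguments. Unset Strict Implicit. Unset Printing Implicit Defensive.
Import Order.TTheory GRing.Theory Num.Theory.
Local Open Scope ring_scope.

Definition dotv (R : rcfType) (N : nat) (x y : 'cV[R]_N) : R :=
  \sum_(i < N) x i 0 * y i 0.

Definition normv (R : rcfType) (N : nat) (x : 'cV[R]_N) : R :=
  Num.sqrt (dotv x x).

Definition Pgamma (R : rcfType) (N : nat) (eta beta : R) (L1 L2 : 'M[R]_N) : 'M[R]_N :=
  let gam := (eta ^+ 2 + beta ^+ 2) / eta in
  (eta%:M - L2 + beta ^+ 2 *: invmx (eta%:M - L1)) *m invmx (gam%:M - L2).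

From mathcomp Require Import all_boot all_order all_algebra.
From mathcomp Require Import ring lra.
Import Order.TTheory GRing.Theory Num.Theory.
Local Open Scope ring_scope.

(* Write A := eta I - L1 and B := gamma I - L2 with gamma = (eta^2+beta^2)/eta;
   both are invertible because L1, L2 are dissipative (<L x, x> <= 0).  For
   v <> 0 put y := B^-1 v, t := A^-1 y and z := P_gamma v, so that
   z = (eta I - L2) y + beta^2 t.  Since gamma - eta = beta^2/eta and
   y - eta t = - L1 t, the residual identity  v = z - (beta^2/eta) L1 t  holds.
   Then
     (a) ||L1 t|| <= ||(eta I - L1) t|| = ||y||     (dissipativity of L1),
     (b) eta ||y||^2 <= <z, y>, hence eta ||y|| <= ||z||  (Cauchy-Schwarz),
     (c) ||v|| <= ||z|| + (beta^2/eta) ||y|| <= (1 + beta^2/eta^2) ||z||,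
   which is the claim. *)

Section InnerProduct.

Context {R : rcfType} {N : nat}.
Implicit Types (x y z : 'cV[R]_N) (a : R).

Lemma dotvC x y : dotv x y = dotv y x.
Proof. by apply: eq_bigr => i _; rewrite mulrC. Qed.

Lemma dotvDl x y z : dotv (x + y) z = dotv x z + dotv y z.
Proof. by rewrite /dotv -big_split; apply: eq_bigr => i _; rewrite mxE mulrDl. Qed.

Lemma dotvZl a x y : dotv (a *: x) y = a * dotv x y.
Proof. by rewrite /dotv mulr_sumr; apply: eq_bigr => i _; rewrite mxE mulrA. Qed.

Lemma dotvNl x y : dotv (- x) y = - dotv x y.
Proof. by rewrite -scaleN1r dotvZl mulN1r. Qed.

Lemma dotvBl x y z : dotv (x - y) z = dotv x z - dotv y z.
Proof. by rewrite dotvDl dotvNl. Qed.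

Lemma dotvDr x y z : dotv z (x + y) = dotv z x + dotv z y.
Proof. by rewrite dotvC dotvDl !(dotvC z). Qed.

Lemma dotvZr a x y : dotv y (a *: x) = a * dotv y x.
Proof. by rewrite dotvC dotvZl dotvC. Qed.

Lemma dotvBr x y z : dotv z (x - y) = dotv z x - dotv z y.
Proof. by rewrite dotvC dotvBl !(dotvC z). Qed.

Lemma dotv0l x : dotv 0 x = 0.
Proof. by rewrite -(scale0r 0) dotvZl mul0r. Qed.

Lemma dotv_ge0 x : 0 <= dotv x x.
Proof. by apply: sumr_ge0 => i _; rewrite -expr2 sqr_ge0. Qed.

Lemma dotv_eq0 x : dotv x x = 0 -> x = 0.
Proof.
move=> x0; apply/matrixP => i j; rewrite (ord1 j) mxE.
have sq_ge0 (k : 'I_N) : true -> 0 <= x k 0 * x k 0 by rewrite -expr2 sqr_ge0.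
by have /eqP := psumr_eq0P sq_ge0 x0 (i := i) isT; rewrite -expr2 sqrf_eq0 => /eqP.
Qed.

(* Cauchy-Schwarz, from the nonnegativity of <b x - c y, b x - c y>
   with b = <y, y> and c = <x, y>. *)
Lemma dotv_CS x y : dotv x y ^+ 2 <= dotv x x * dotv y y.
Proof.
set a := dotv x x; set b := dotv y y; set c := dotv x y.
have expand : dotv (b *: x - c *: y) (b *: x - c *: y) = b * (a * b - c ^+ 2).
  by rewrite !(dotvBl, dotvBr, dotvZl, dotvZr) (dotvC y x) -/a -/b -/c; ring.
have [b0 | b_neq0] := eqVneq b 0.
  by rewrite /c (dotv_eq0 _ b0) dotvC dotv0l expr0n /= b0 mulr0.
have b_gt0 : 0 < b by rewrite lt_def b_neq0 dotv_ge0.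
by have := dotv_ge0 (b *: x - c *: y); rewrite expand pmulr_rge0 // subr_ge0 mulrC.
Qed.

Lemma normv_ge0 x : 0 <= normv x.
Proof. exact: sqrtr_ge0. Qed.

Lemma normv_sqr x : normv x ^+ 2 = dotv x x.
Proof. by rewrite sqr_sqrtr // dotv_ge0. Qed.

Lemma normv_gt0 x : x != 0 -> 0 < normv x.
Proof.
move=> x_neq0; rewrite lt_def normv_ge0 andbT; apply: contra x_neq0 => /eqP nx0.
by apply/eqP/dotv_eq0; rewrite -normv_sqr nx0 expr0n.
Qed.

Lemma normvZ a x : normv (a *: x) = `|a| * normv x.
Proof.
by rewrite /normv dotvZl dotvZr mulrA -expr2 sqrtrM ?sqr_ge0 // sqrtr_sqr.
Qed.

Lemma dotv_le_norm x y : dotv x y <= normv x * normv y.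
Proof.
have := dotv_CS x y; rewrite -!normv_sqr.
have := normv_ge0 x; have := normv_ge0 y.
set c := dotv x y; set p := normv x; set q := normv y => q_ge0 p_ge0 cs.
have : 0 <= p * q by apply: mulr_ge0.
nra.
Qed.

Lemma normv_triangle x y : normv (x + y) <= normv x + normv y.
Proof.
have sq := normv_sqr (x + y); rewrite dotvDl !dotvDr (dotvC y x) -!normv_sqr in sq.
have := dotv_le_norm x y; move: sq.
have := normv_ge0 x; have := normv_ge0 y; have := normv_ge0 (x + y).
set c := dotv x y; set p := normv x; set q := normv y; set r := normv (x + y).
move=> r_ge0 q_ge0 p_ge0 sq c_le.
have : r ^+ 2 <= (p + q) ^+ 2 by rewrite sq; nra.
nra.
Qed.

Lemma coercive_norm_bound (c : R) y z :
  c * dotv y y <= dotv z y -> c * normv y <= normv z.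
Proof.
rewrite -normv_sqr; have := dotv_le_norm z y.
have := normv_ge0 y; have := normv_ge0 z.
set p := normv y; set q := normv z => q_ge0 p_ge0 cs coer.
have [-> | p_neq0] := eqVneq p 0; first by rewrite mulr0.
have p_gt0 : 0 < p by rewrite lt_def p_neq0 p_ge0.
rewrite -(ler_pM2r p_gt0) -mulrA -expr2.
exact: le_trans coer cs.
Qed.

End InnerProduct.

Section ShiftedDissipative.

Context {R : rcfType} {N : nat}.
Implicit Types (L M : 'M[R]_N) (x : 'cV[R]_N) (c : R).

Definition dissipative L := forall x, dotv (L *m x) x <= 0.

Lemma shift_mulmx c L x : (c%:M - L) *m x = c *: x - L *m x.
Proof. by rewrite mulmxBl mul_scalar_mx. Qed.

(* A coercive matrix has trivial kernel, hence is invertible. *)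
Lemma coercive_unitmx M c :
  0 < c -> (forall x, c * dotv x x <= dotv (M *m x) x) -> M \in unitmx.
Proof.
move=> c_gt0 coer.
rewrite -unitmx_tr -row_free_unit -kermx_eq0; apply/eqP/row_matrixP => i.
rewrite row0; set u := row i (kermx M^T).
have Mu0 : M *m u^T = 0.
  by rewrite -[M]trmxK -trmx_mul (sub_kermxP (row_sub i _)) trmx0.
have uu0 : dotv u^T u^T = 0.
  apply/eqP; rewrite eq_le dotv_ge0 andbT -(pmulr_rle0 _ c_gt0).
  by have := coer u^T; rewrite Mu0 dotv0l.
by rewrite -[u]trmxK (dotv_eq0 _ uu0) trmx0.
Qed.

Lemma shift_coercive c L x :
  dissipative L -> c * dotv x x <= dotv ((c%:M - L) *m x) x.
Proof. by move=> dissL; rewrite shift_mulmx dotvBl dotvZl; have := dissL x; lra. Qed.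

Lemma shift_unitmx c L : 0 < c -> dissipative L -> c%:M - L \in unitmx.
Proof.
by move=> c_gt0 dissL; apply: (coercive_unitmx _ _ c_gt0) => x; apply: shift_coercive.
Qed.

(* ||L x|| <= ||(c I - L) x||: expand the square and drop c^2||x||^2 - 2c<Lx,x>. *)
Lemma shift_norm_bound c L x :
  0 <= c -> dissipative L -> normv (L *m x) <= normv ((c%:M - L) *m x).
Proof.
move=> c_ge0 dissL; rewrite /normv ler_sqrt ?dotv_ge0 // shift_mulmx.
rewrite !(dotvBl, dotvBr, dotvZl, dotvZr) (dotvC x (L *m x)).
have := dissL x; have := dotv_ge0 x; nra.
Qed.

(* With y = (c I - L1) t, the vector (c I - L2) y + b t is coercive along y;
   this is step (b) of the proof, before Cauchy-Schwarz. *)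
Lemma shift_pair_coercive {c b L1 L2 t y} :
  0 <= c -> 0 <= b -> dissipative L1 -> dissipative L2 -> y = (c%:M - L1) *m t ->
  c * dotv y y <= dotv ((c%:M - L2) *m y + b *: t) y.
Proof.
move=> c_ge0 b_ge0 dissL1 dissL2 y_def.
have ty_ge0 : 0 <= dotv t y.
  by rewrite dotvC y_def; apply: le_trans (shift_coercive _ _ _ dissL1);
     rewrite mulr_ge0 ?dotv_ge0.
rewrite dotvDl dotvZl; have := shift_coercive c _ y dissL2.
have : 0 <= b * dotv t y by apply: mulr_ge0.
lra.
Qed.

End ShiftedDissipative.

Lemma residual_identity (R : rcfType) (N : nat) (eta beta : R) (L1 L2 : 'M[R]_N)
    (t : 'cV[R]_N) :
  eta != 0 ->
  let y := (eta%:M - L1) *m t in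
  (((eta ^+ 2 + beta ^+ 2) / eta)%:M - L2) *m y
    = ((eta%:M - L2) *m y + beta ^+ 2 *: t) - (beta ^+ 2 / eta) *: (L1 *m t).
Proof.
move=> eta_neq0 y; rewrite /y !shift_mulmx.
move: (L2 *m (eta *: t - L1 *m t)) (L1 *m t) => L2y L1t.
by apply/matrixP => i j; rewrite !mxE; field.
Qed.

Lemma ratio_bound {R : realFieldType} {eta beta ny nz nv : R} :
  0 < eta -> 0 < nv -> eta * ny <= nz -> nv <= nz + beta ^+ 2 / eta * ny ->
  eta ^+ 2 / (eta ^+ 2 + beta ^+ 2) <= nz / nv.
Proof.
move=> eta_gt0 nv_gt0 hy hv.
have beta2_ge0 : 0 <= beta ^+ 2 by apply: sqr_ge0.
have sum_gt0 : 0 < eta ^+ 2 + beta ^+ 2 by rewrite ltr_wpDr ?exprn_gt0.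
have key : eta ^+ 2 * nv <= nz * (eta ^+ 2 + beta ^+ 2).
  have e2_gt0 : 0 < eta ^+ 2 by rewrite exprn_gt0.
  have := ler_wpM2l beta2_ge0 hy; have := ler_wpM2l (ltW e2_gt0) hv.
  have -> : eta ^+ 2 * (nz + beta ^+ 2 / eta * ny)
          = eta ^+ 2 * nz + beta ^+ 2 * (eta * ny) by field; rewrite gt_eqF.
  lra.
by rewrite ler_pdivrMr // mulrAC ler_pdivlMr // mulrC.
Qed.

Theorem mainTheorem4 (R : rcfType) (N : nat) (eta beta : R)
  (L1 L2 : 'M[R]_N) :
  0 < eta ->
  (forall x : 'cV[R]_N, dotv (L1 *m x) x <= 0) ->
  (forall x : 'cV[R]_N, dotv (L2 *m x) x <= 0) ->
  (forall w : 'cV[R]_N, 0 <= dotv (L1 *m w) (L2 *m w)) ->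
  forall v : 'cV[R]_N, v != 0 ->
    eta ^+ 2 / (eta ^+ 2 + beta ^+ 2) <= normv (Pgamma eta beta L1 L2 *m v) / normv v.
Proof.
move=> eta_gt0 dissL1 dissL2 _ v v_neq0; rewrite /Pgamma /=.
set gam := (eta ^+ 2 + beta ^+ 2) / eta.
have beta2_ge0 : 0 <= beta ^+ 2 by apply: sqr_ge0.
have gam_gt0 : 0 < gam by rewrite divr_gt0 // ltr_wpDr ?exprn_gt0.
set A := eta%:M - L1; set B := gam%:M - L2.
set y := invmx B *m v; set t := invmx A *m y.
have y_def : y = A *m t by rewrite mulmxA mulmxV ?mul1mx ?shift_unitmx.
have v_def : v = B *m y by rewrite mulmxA mulmxV ?mul1mx ?shift_unitmx.
set z := _ *m v.
have z_def : z = (eta%:M - L2) *m y + beta ^+ 2 *: t.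
  by rewrite /z -mulmxA -/y mulmxDl -scalemxAl.
have residual : v = z - (beta ^+ 2 / eta) *: (L1 *m t).
  by rewrite {1}v_def z_def y_def residual_identity ?gt_eqF.
have L1t_le : normv (L1 *m t) <= normv y by rewrite y_def shift_norm_bound ?ltW.
have y_le : eta * normv y <= normv z.
  apply: coercive_norm_bound; rewrite z_def.
  exact: shift_pair_coercive (ltW eta_gt0) beta2_ge0 dissL1 dissL2 y_def.
have v_le : normv v <= normv z + beta ^+ 2 / eta * normv y.
  rewrite {1}residual; apply: le_trans (normv_triangle _ _) _.
  have k_ge0 : 0 <= beta ^+ 2 / eta by rewrite divr_ge0 // ltW.
  by rewrite -scaleNr normvZ normrN ger0_norm // lerD2l ler_wpM2l.
exact: ratio_bound eta_gt0 (normv_gt0 _ v_neq0) y_le v_le.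
Qed.
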